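(* Let $N\ge d$ and let $K\subset\mathbb{R}^d$ be a compact convex polytope of dimension $d$ with codimension-one faces $F_0,\dots,F_N$. Suppose every collection of $d$ normal vectors of the hyperplanes containing these faces is linearly independent. Let $S\supseteq K$ be a $d$-dimensional simplex each of whose codimension-one faces contains a face of $K$. Then for every nonzero vector $b\in\mathbb{R}^d$, the translate $b+K$ contains points not in $S$.
   Context: The simplices $S$ considered are those appearing in a representation $K=\bigcap_j S_j$ of $K$ as an intersection of $d$-dimensional simplices each of whose faces contains a face of $K$. *)

From HB Require Import structures.
From mathcomp Require Import all_boot all_order all_algebra.
From mathcomp Require Import reals.
Set Implicit Arguments. Unset Strict Implicit. Unset Printing Implicit Defensive.
Import Order.TTheory GRing.Theory Num.Theory.
Local Open Scope ring_scope.

Section Defs.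
Variables (R : realType) (d : nat).
Notation vec := 'rV[R]_d.

Definition dotp (u v : vec) : R := (u *m v^T) 0 0.

Definition affdim_ge (F : vec -> Prop) (k : nat) : Prop :=
  exists p : 'I_k.+1 -> vec, (forall i, F (p i)) /\
    row_free (\matrix_(i < k) (p (lift ord0 i) - p ord0)).

Definition affdim (F : vec -> Prop) (k : nat) : Prop :=
  affdim_ge F k /\ ~ affdim_ge F k.+1.

Definition hpoly (m : nat) (a : 'I_m -> vec) (c : 'I_m -> R) (x : vec) : Prop :=
  forall i, dotp (a i) x <= c i.

Definition hface (m : nat) (a : 'I_m -> vec) (c : 'I_m -> R) (i : 'I_m)
  (x : vec) : Prop :=
  hpoly a c x /\ dotp (a i) x = c i.

Definition bounded (K : vec -> Prop) : Prop :=
  exists M : R, forall x, K x -> forall j, `|x 0 j| <= M.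

Definition conv_hull (m : nat) (v : 'I_m -> vec) (P : 'I_m -> bool) (x : vec)
  : Prop :=
  exists l : 'I_m -> R, (forall j, 0 <= l j) /\ (forall j, ~~ P j -> l j = 0) /\
    \sum_(j < m) l j = 1 /\ x = \sum_(j < m) l j *: v j.

Definition aff_indep (v : 'I_d.+1 -> vec) : Prop :=
  row_free (\matrix_(i < d) (v (lift ord0 i) - v ord0)).

Definition simplex (v : 'I_d.+1 -> vec) : vec -> Prop := conv_hull v predT.

Definition simplex_facet (v : 'I_d.+1 -> vec) (j : 'I_d.+1) : vec -> Prop :=
  conv_hull v (predC1 j).

End Defs.

From HB Require Import structures.
From mathcomp Require Import all_boot all_order all_algebra.
From mathcomp Require Import reals.
From Stdlib Require Import Classical.
Set Implicit Arguments. Unset Strict Implicit. Unset Printing Implicit Defensive.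
Import Order.TTheory GRing.Theory Num.Theory.
Local Open Scope ring_scope.

(* If b + K lay inside S, pick for each facet j of S a point x of a face of K
   lying on that facet.  The barycentric coordinates of x vanish at j and those
   of b + x are nonnegative, so b = sum_k mu_k v_k with sum_k mu_k = 0 and
   mu_j >= 0.  Affine independence of the vertices makes such mu unique, hence
   independent of j; so mu >= 0 with zero sum, i.e. mu = 0 and b = 0. *)

Section SimplexCoordinates.
Variables (R : realType) (d : nat) (v : 'I_d.+1 -> 'rV[R]_d).
Hypothesis v_indep : aff_indep v.

Lemma aff_indep_zero_combination (g : 'I_d.+1 -> R) :
  \sum_k g k = 0 -> \sum_k g k *: v k = 0 -> forall k, g k = 0.
Proof.
move=> sum_g0 comb_g0.
have diff_comb0 : \sum_(i < d) g (lift ord0 i) *: (v (lift ord0 i) - v ord0) = 0.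
  have : \sum_k g k *: (v k - v ord0) = 0.
    under eq_bigr do rewrite scalerBr.
    by rewrite sumrB -scaler_suml sum_g0 scale0r subr0.
  by rewrite big_ord_recl subrr scaler0 add0r.
have w0 : \row_(i < d) g (lift ord0 i) = 0.
  apply: (row_free_inj v_indep); rewrite mul0mx mulmx_sum_row -[RHS]diff_comb0.
  by apply: eq_bigr => i _; rewrite rowK mxE.
have g_lift0 i : g (lift ord0 i) = 0.
  by have := congr1 (fun m : 'rV[R]_d => m 0 i) w0; rewrite /= !mxE.
have g_ord0 : g ord0 = 0.
  by move: sum_g0; rewrite big_ord_recl big1 ?addr0 // => i _; rewrite g_lift0.
by move=> k; case: (unliftP ord0 k) => [j ->|->].
Qed.

Lemma aff_indep_coeff_eq (g h : 'I_d.+1 -> R) :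
  \sum_k g k = \sum_k h k -> \sum_k g k *: v k = \sum_k h k *: v k ->
  forall k, g k = h k.
Proof.
move=> /eqP; rewrite -subr_eq0 -sumrB => /eqP sum_gh.
move=> /eqP; rewrite -subr_eq0 -sumrB => /eqP comb_gh k.
apply/eqP; rewrite -subr_eq0; apply/eqP.
apply: (@aff_indep_zero_combination (fun k => g k - h k)) => //.
by rewrite -[RHS]comb_gh; apply: eq_bigr => i _; rewrite scalerBl.
Qed.

End SimplexCoordinates.

Lemma facet_translate_coords (R : realType) (d : nat) (v : 'I_d.+1 -> 'rV[R]_d)
    (j : 'I_d.+1) (b x : 'rV[R]_d) :
  simplex_facet v j x -> simplex v (b + x) ->
  exists mu : 'I_d.+1 -> R,
    [/\ 0 <= mu j, \sum_k mu k = 0 & b = \sum_k mu k *: v k].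
Proof.
move=> [l [_ [l_off [sum_l ->]]]] [m [m_ge0 [_ [sum_m e_m]]]].
exists (fun k => m k - l k); split.
- by rewrite l_off ?subr0 //= eqxx.
- by rewrite sumrB sum_l sum_m subrr.
- by under eq_bigr do rewrite scalerBl; rewrite sumrB -e_m addrK.
Qed.

Lemma translate_meeting_all_facets_eq0 (R : realType) (d : nat)
    (v : 'I_d.+1 -> 'rV[R]_d) (b : 'rV[R]_d) :
  aff_indep v ->
  (forall j, exists x, simplex_facet v j x /\ simplex v (b + x)) -> b = 0.
Proof.
move=> v_indep meets.
have coords j : exists mu : 'I_d.+1 -> R,
    [/\ 0 <= mu j, \sum_k mu k = 0 & b = \sum_k mu k *: v k].
  by have [x [xj bxS]] := meets j; exact: facet_translate_coords xj bxS.
have [mu [_ sum_mu0 b_mu]] := coords ord0.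
have mu_ge0 j : 0 <= mu j.
  have [nu [nu_j_ge0 sum_nu0 b_nu]] := coords j.
  rewrite (@aff_indep_coeff_eq _ _ _ v_indep mu nu) //.
    by rewrite sum_mu0 sum_nu0.
  by rewrite -b_mu -b_nu.
have mu0 := psumr_eq0P (fun k _ => mu_ge0 k) sum_mu0.
by rewrite b_mu big1 // => k _; rewrite mu0 // scale0r.
Qed.

Theorem lemma3p9 (R : realType) (d N : nat) (a : 'I_N.+1 -> 'rV[R]_d)
  (c : 'I_N.+1 -> R) (v : 'I_d.+1 -> 'rV[R]_d) :
  (0 < d)%N -> (d <= N)%N ->
  (* K := hpoly a c is a compact d-dimensional polytope *)
  bounded (hpoly a c) -> affdim (hpoly a c) d ->
  (* its codimension-one faces are exactly F_i := hface a c i, i = 0..N *)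
  (forall i, affdim (hface a c i) d.-1) ->
  (forall i j, i != j -> hface a c i <> hface a c j) ->
  (* any d of the normals a i are linearly independent *)
  (forall f : 'I_d -> 'I_N.+1, injective f ->
     row_free (\matrix_(k < d) a (f k))) ->
  (* S := simplex v is a d-simplex containing K *)
  aff_indep v ->
  (forall x, hpoly a c x -> simplex v x) ->
  (* each codimension-one face of S contains a codimension-one face of K *)
  (forall j, exists i, forall x, hface a c i x -> simplex_facet v j x) ->
  forall b : 'rV[R]_d, b != 0 ->
    exists x, hpoly a c x /\ ~ simplex v (b + x).
Proof.
move=> _ _ _ _ face_dim _ _ v_indep _ facet_has_face b /eqP b_neq0.
apply: NNPP => translate_in_S; apply: b_neq0.
apply: (translate_meeting_all_facets_eq0 v_indep) => j.
have [i face_in_facet] := facet_has_face j.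
have [[p [p_in_face _]] _] := face_dim i.
exists (p ord0); split; first exact: face_in_facet.
apply: NNPP => bp_notin_S; apply: translate_in_S.
by exists (p ord0); split; first by case: (p_in_face ord0).
Qed.
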